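(* Let $\mathbb{K}$ be a field of characteristic zero and $m$ a positive integer. Let $V_m$ be the set of all rational functions of the form $\sum_{i=1}^I a_i/b_i^m$ (with $I\ge 0$), where $a_i,b_i\in\mathbb{K}(x,y)[z]$, $\deg_z(a_i)<\deg_z(b_i)$, and the $b_i$ are distinct irreducible polynomials in $\mathbb{K}(x,y)[z]$. Let $f\in V_m$ and $P=\sum_{i,j,k}p_{i,j,k}S_x^iS_y^jS_z^k$ with $p_{i,j,k}\in\mathbb{K}(x,y)$. Then $P(f)\in V_m$.
   Context: The action of $P$ on a rational function $f\in\mathbb{K}(x,y,z)$ is $P(f)=\sum_{i,j,k}p_{i,j,k}\,f(x+i,y+j,z+k)$. *)

From HB Require Import structures.
From mathcomp Require Import all_boot all_order all_algebra.
Set Implicit Arguments. Unset Strict Implicit. Unset Printing Implicit Defensive.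
Import Order.TTheory GRing.Theory Num.Theory.
Local Open Scope ring_scope.
Local Notation "x %:F" := (@FracField.tofrac _ x).

(* Lifting a (injective ring) map between integral domains to their fraction
   fields: n/d |-> s(n)/s(d), computed on the canonical representative. *)
Definition frac_map (R S : idomainType) (s : R -> S) (f : {fraction R})
  : {fraction S} :=
  let r := repr f in (s \n_r)%:F / (s \d_r)%:F.

(* K[x,y] = {poly {poly K}} : inner variable x, outer variable y. *)
Definition polyxy (K : fieldType) := {poly {poly K}}.
Definition ratxy (K : fieldType) := {fraction {poly {poly K}}}.
Definition polyz (K : fieldType) := {poly {fraction {poly {poly K}}}}.
Definition ratxyz (K : fieldType) := {fraction {poly {fraction {poly {poly K}}}}}.

(* q(x,y) |-> q(x+i, y+j) on K[x,y] *)
Definition shift_xy_poly (K : fieldType) (i j : nat) (q : {poly {poly K}})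
  : {poly {poly K}} :=
  (map_poly (fun c : {poly K} => c \Po ('X + (i%:R)%:P)) q) \Po ('X + (j%:R)%:P).

Definition shift_xy (K : fieldType) (i j : nat)
  (f : {fraction {poly {poly K}}}) : {fraction {poly {poly K}}} :=
  frac_map (shift_xy_poly i j) f.

Definition shift_xyz_poly (K : fieldType) (i j k : nat)
  (a : {poly {fraction {poly {poly K}}}}) : {poly {fraction {poly {poly K}}}} :=
  (map_poly (shift_xy i j) a) \Po ('X + (k%:R)%:P).

Definition shift_xyz (K : fieldType) (i j k : nat)
  (f : {fraction {poly {fraction {poly {poly K}}}}})
  : {fraction {poly {fraction {poly {poly K}}}}} :=
  frac_map (shift_xyz_poly i j k) f.

Definition apply_op (K : fieldType) (n : nat)
  (p : nat -> nat -> nat -> {fraction {poly {poly K}}})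
  (f : {fraction {poly {fraction {poly {poly K}}}}})
  : {fraction {poly {fraction {poly {poly K}}}}} :=
  \sum_(i < n) \sum_(j < n) \sum_(k < n)
     ((p i j k)%:P)%:F * shift_xyz i j k f.

Definition in_Vm (K : fieldType) (m : nat)
  (f : {fraction {poly {fraction {poly {poly K}}}}}) : Prop :=
  exists s : seq ({poly {fraction {poly {poly K}}}} * {poly {fraction {poly {poly K}}}}),
    [/\ forall ab, ab \in s -> (size ab.1 < size ab.2)%N,
        forall ab, ab \in s -> irreducible_poly ab.2,
        uniq (map snd s) &
        f = \sum_(ab <- s) (ab.1)%:F / (ab.2)%:F ^+ m].

(* The shift (x, y, z) |-> (x + i, y + j, z + k) acts on K(x,y)[z] as a ring
   automorphism that preserves the degree in z: it twists the coefficients by the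
   (invertible) shift of K(x,y) and then substitutes z + k for z.  Such an
   automorphism sends irreducible polynomials to irreducible ones and distinct
   ones to distinct ones, so it maps every expansion sum a_i / b_i^m to an
   expansion of the same shape.  V_m is also closed under multiplication by
   elements of K(x,y), and under addition: a term whose denominator already
   occurs is merged with it by adding numerators, which keeps deg_z a < deg_z b. *)

From HB Require Import structures.
From mathcomp Require Import all_boot all_order all_algebra.
Set Implicit Arguments. Unset Strict Implicit.
Import GRing.Theory.
Local Open Scope ring_scope.
Local Notation "x %:F" := (@FracField.tofrac _ x).

Lemma tofrac_repr (R : idomainType) (x : {fraction R}) :
  (\n_(repr x))%:F / (\d_(repr x))%:F = x.
Proof.
rewrite -[in RHS](reprK x); unlock FracField.tofrac.
rewrite /GRing.inv /= -FracField.pi_inv /GRing.mul /= -FracField.pi_mul.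
congr (_ _); rewrite /FracField.mulf /FracField.invf.
rewrite !numden_Ratio ?oner_neq0 ?denom_ratioP //.
by rewrite mulr1 mul1r Ratio_numden.
Qed.

Lemma frac_ind (R : idomainType) (P : {fraction R} -> Prop) :
  (forall n d, d != 0 -> P (n%:F / d%:F)) -> forall x, P x.
Proof. by move=> Pnd x; rewrite -[x]tofrac_repr; apply/Pnd/denom_ratioP. Qed.

Lemma eq_frac_map (R S : idomainType) (s1 s2 : R -> S) :
  s1 =1 s2 -> frac_map s1 =1 frac_map s2.
Proof. by move=> eq_s x; rewrite /frac_map !eq_s. Qed.

Section FracMap.
Variables (R S : idomainType) (s : {rmorphism R -> S}).
Hypothesis s_inj : injective s.

Lemma frac_map_div n d : d != 0 -> frac_map s (n%:F / d%:F) = (s n)%:F / (s d)%:F.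
Proof.
move=> d0; rewrite /frac_map; set r := repr _.
have r0 : \d_r != 0 := denom_ratioP r.
have /eqP := tofrac_repr (n%:F / d%:F).
rewrite -/r eqr_div ?tofrac_eq0 // -!tofracM tofrac_eq => /eqP rE.
apply/eqP; rewrite eqr_div ?tofrac_eq0 ?(raddf_eq0 _ s_inj) //.
by rewrite -!tofracM tofrac_eq -!rmorphM rE.
Qed.

Lemma frac_map_tofrac n : frac_map s n%:F = (s n)%:F.
Proof.
by rewrite -[n%:F]divr1 -tofrac1 frac_map_div ?oner_neq0 // rmorph1 tofrac1 divr1.
Qed.

Lemma frac_mapD : {morph frac_map s : x y / x + y}.
Proof.
elim/frac_ind => a b b0; elim/frac_ind => c d d0.
have sb0 : s b != 0 by rewrite (raddf_eq0 _ s_inj).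
have sd0 : s d != 0 by rewrite (raddf_eq0 _ s_inj).
rewrite !frac_map_div // !addf_div ?tofrac_eq0 // -!tofracM -!tofracD.
by rewrite frac_map_div ?mulf_neq0 // rmorphD !rmorphM.
Qed.

Lemma frac_mapN : {morph frac_map s : x / - x}.
Proof.
elim/frac_ind => a b b0.
by rewrite -mulNr -tofracN !frac_map_div // rmorphN tofracN mulNr.
Qed.

Lemma frac_mapM : {morph frac_map s : x y / x * y}.
Proof.
elim/frac_ind => a b b0; elim/frac_ind => c d d0.
rewrite !frac_map_div // !mulf_div -!tofracM.
by rewrite frac_map_div ?mulf_neq0 // !rmorphM.
Qed.

Lemma frac_map_is_zmod_morphism : zmod_morphism (frac_map s).
Proof. by move=> x y; rewrite frac_mapD frac_mapN. Qed.

Lemma frac_map_is_monoid_morphism : monoid_morphism (frac_map s).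
Proof. by split; [rewrite -tofrac1 frac_map_tofrac rmorph1 | exact: frac_mapM]. Qed.

End FracMap.

Lemma frac_mapK (R S : idomainType) (s : {rmorphism R -> S}) (t : {rmorphism S -> R}) :
  cancel s t -> cancel t s -> cancel (frac_map s) (frac_map t).
Proof.
move=> sK tK; elim/frac_ind => n d d0.
have sd0 : s d != 0 by rewrite raddf_eq0 //; apply: can_inj sK.
by rewrite frac_map_div ?frac_map_div ?sK //; [apply: can_inj tK | apply: can_inj sK].
Qed.

Definition shift_map_poly (R S : nzRingType) (phi : R -> S) (c : S) (p : {poly R}) :=
  map_poly phi p \Po ('X + c%:P).

Section ShiftMapPoly.
Variables (R S : comNzRingType) (phi : {rmorphism R -> S}) (c : S).

Lemma shift_map_poly_is_zmod_morphism : zmod_morphism (shift_map_poly phi c).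
Proof. by move=> p q; rewrite /shift_map_poly rmorphB comp_polyB. Qed.

Lemma shift_map_poly_is_monoid_morphism : monoid_morphism (shift_map_poly phi c).
Proof.
rewrite /shift_map_poly; split; first by rewrite rmorph1 comp_polyC.
by move=> p q; rewrite rmorphM comp_polyM.
Qed.

HB.instance Definition _ := GRing.isZmodMorphism.Build _ _ (shift_map_poly phi c)
  shift_map_poly_is_zmod_morphism.
HB.instance Definition _ := GRing.isMonoidMorphism.Build _ _ (shift_map_poly phi c)
  shift_map_poly_is_monoid_morphism.

Lemma shift_map_polyK (psi : {rmorphism S -> R}) :
  cancel phi psi -> cancel (shift_map_poly phi c) (shift_map_poly psi (- psi c)).
Proof.
move=> phiK p; rewrite /shift_map_poly map_comp_poly rmorphD /= map_polyX map_polyC /=.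
by rewrite -map_poly_comp map_poly_id ?polyCN ?comp_polyXaddC_K // => x _ /=.
Qed.

End ShiftMapPoly.

Lemma size_shift_map_poly (R S : idomainType) (phi : {rmorphism R -> S}) c p :
  injective phi -> size (shift_map_poly phi c p) = size p.
Proof.
move=> phi_inj; rewrite /shift_map_poly size_comp_poly2 ?size_XaddC //.
by rewrite size_map_inj_poly ?rmorph0.
Qed.

Section Shifts.
Variable K : fieldType.

Definition shift2_poly (a b : K) : {poly {poly K}} -> {poly {poly K}} :=
  shift_map_poly (comp_poly ('X + a%:P)) b%:P.

Lemma shift2_polyK a b : cancel (shift2_poly a b) (shift2_poly (-a) (-b)).
Proof.
have := shift_map_polyK (phi := comp_poly ('X + a%:P)) b%:P
  (psi := comp_poly ('X + (-a)%:P)).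
by rewrite /= comp_polyC -polyCN; apply=> q; rewrite polyCN comp_polyXaddC_K.
Qed.

Definition shift2_frac (a b : K) := frac_map (shift2_poly a b).

HB.instance Definition _ a b := GRing.isZmodMorphism.Build _ _ (shift2_frac a b)
  (frac_map_is_zmod_morphism (can_inj (shift2_polyK a b))).
HB.instance Definition _ a b := GRing.isMonoidMorphism.Build _ _ (shift2_frac a b)
  (frac_map_is_monoid_morphism (can_inj (shift2_polyK a b))).

Lemma shift2_fracK a b : cancel (shift2_frac a b) (shift2_frac (-a) (-b)).
Proof.
apply: frac_mapK; first exact: shift2_polyK.
by have := shift2_polyK (-a) (-b); rewrite !opprK.
Qed.

Lemma shift_map_shift2_frac_bij a b (k : nat) :
  bijective (shift_map_poly (shift2_frac a b) k%:R).
Proof.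
exists (shift_map_poly (shift2_frac (-a) (-b)) (- k%:R)).
  by have := shift_map_polyK k%:R (shift2_fracK a b); rewrite rmorph_nat.
have := shift_map_polyK (- k%:R) (psi := shift2_frac a b).
rewrite rmorphN rmorph_nat opprK; apply.
by have := shift2_fracK (-a) (-b); rewrite !opprK.
Qed.

End Shifts.

Lemma shift_xyzE (K : fieldType) i j k :
  shift_xyz i j k =1 frac_map (shift_map_poly (@shift2_frac K i%:R j%:R) k%:R).
Proof.
apply: eq_frac_map => q; rewrite /shift_xyz_poly /shift_map_poly.
congr (_ \Po _); apply: eq_map_poly; apply: eq_frac_map => {}q.
by rewrite /shift_xy_poly /shift2_poly /shift_map_poly !polyC_natr.
Qed.

Lemma irreducible_poly_rmorph (F : fieldType) (g : {rmorphism {poly F} -> {poly F}}) p :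
  (forall q, size (g q) = size q) -> bijective g ->
  irreducible_poly p -> irreducible_poly (g p).
Proof.
move=> g_size [h gK hK] [p_gt1 p_irr]; split=> [|q q_neq1 q_dvd]; first by rewrite g_size.
have g_dvdp u v : u %| v -> g u %| g v.
  by case/dvdpP=> w ->; rewrite rmorphM dvdp_mull.
have : h q %= p.
  apply: p_irr; first by rewrite -g_size hK.
  case/dvdpP: q_dvd => c Ec; apply/dvdpP; exists (h c).
  by apply: (can_inj gK); rewrite rmorphM !hK.
by case/andP=> hq_p p_hq; rewrite -[q]hK; apply/andP; split; apply: g_dvdp.
Qed.

Section PartialFractions.
Variables (F : fieldType) (m : nat).
Implicit Types (a b : {poly F}) (s t : seq ({poly F} * {poly F})).
Implicit Types (f g : {fraction {poly F}}).

Definition pfrac_family s :=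
  [/\ forall ab, ab \in s -> (size ab.1 < size ab.2)%N,
      forall ab, ab \in s -> irreducible_poly ab.2 & uniq (map snd s)].

Definition pfrac_sum s := \sum_(ab <- s) (ab.1)%:F / (ab.2)%:F ^+ m.

Definition pfrac_expansion f := exists2 s, pfrac_family s & f = pfrac_sum s.

Lemma pfrac_family_cons a b s :
  pfrac_family ((a, b) :: s) <->
  [/\ (size a < size b)%N, irreducible_poly b, b \notin map snd s & pfrac_family s].
Proof.
split=> [[sz irr /= /andP[b_s s_uniq]] | [ab b_irr b_s [sz irr s_uniq]]].
  split; [exact: sz (mem_head _ _) | exact: irr (mem_head _ _) | by [] |].
  by split=> // x xs; [apply: sz | apply: irr]; rewrite inE xs orbT.
split=> [x | x |]; rewrite ?inE /= ?b_s //.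
  by case/orP=> [/eqP-> //|]; apply: sz.
by case/orP=> [/eqP-> //|]; apply: irr.
Qed.

Lemma pfrac_family_perm s t : perm_eq s t -> pfrac_family s -> pfrac_family t.
Proof.
move=> st [sz irr s_uniq].
split=> [x|x|]; rewrite -?(perm_mem st); [exact: sz | exact: irr |].
by rewrite -(perm_uniq (perm_map snd st)).
Qed.

Lemma pfrac_expansion0 : pfrac_expansion 0.
Proof. by exists [::]; rewrite /pfrac_sum ?big_nil. Qed.

Lemma pfrac_expansion_add_term f a b : (size a < size b)%N -> irreducible_poly b ->
  pfrac_expansion f -> pfrac_expansion (f + a%:F / b%:F ^+ m).
Proof.
move=> ab b_irr [s s_fam ->].
have [/mapP[[a' b'] s_ab /= eq_b]|b_s] := boolP (b \in map snd s).
  have s_perm := perm_to_rem s_ab; rewrite -{}eq_b in s_perm *.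
  have /pfrac_family_cons[a'b' _ b_rem rem_fam] := pfrac_family_perm s_perm s_fam.
  exists ((a' + a, b) :: rem (a', b) s).
    apply/pfrac_family_cons; split=> //.
    by rewrite (leq_ltn_trans (size_polyD _ _)) // gtn_max a'b'.
  by rewrite /pfrac_sum (perm_big _ s_perm) !big_cons tofracD mulrDl addrAC.
exists ((a, b) :: s); first exact/pfrac_family_cons.
by rewrite /pfrac_sum big_cons addrC.
Qed.

Lemma pfrac_expansionD f g :
  pfrac_expansion f -> pfrac_expansion g -> pfrac_expansion (f + g).
Proof.
move=> Ef [s]; elim: s f Ef g => [|[a b] s IHs] f Ef g.
  by move=> _ ->; rewrite /pfrac_sum big_nil addr0.
case/pfrac_family_cons=> ab b_irr _ s_fam ->; rewrite /pfrac_sum big_cons addrA.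
by apply: IHs s_fam _ => //; apply: pfrac_expansion_add_term.
Qed.

Lemma pfrac_expansion_sum (I : Type) (r : seq I) (P : pred I)
    (E : I -> {fraction {poly F}}) :
  (forall i, P i -> pfrac_expansion (E i)) -> pfrac_expansion (\sum_(i <- r | P i) E i).
Proof.
by move=> EP; apply: big_ind => //; [exact: pfrac_expansion0 | exact: pfrac_expansionD].
Qed.

Lemma pfrac_expansion_mulC c f : pfrac_expansion f -> pfrac_expansion ((c%:P)%:F * f).
Proof.
case=> s [sz irr s_uniq] ->; exists (map (fun ab => (c%:P * ab.1, ab.2)) s).
  split=> [_ /mapP[x xs ->]|_ /mapP[x xs ->]|]; last by rewrite -map_comp.
    by rewrite mul_polyC (leq_ltn_trans (size_scale_leq _ _)) ?sz.
  exact: irr xs.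
by rewrite /pfrac_sum big_map mulr_sumr; apply: eq_bigr => x _; rewrite tofracM mulrA.
Qed.

Lemma pfrac_expansion_frac_map (g : {rmorphism {poly F} -> {poly F}}) f :
  (forall p, size (g p) = size p) -> bijective g ->
  pfrac_expansion f -> pfrac_expansion (frac_map g f).
Proof.
move=> g_size g_bij [s [sz irr s_uniq] ->]; have g_inj := bij_inj g_bij.
exists (map (fun ab => (g ab.1, g ab.2)) s).
  split=> [_ /mapP[x xs ->]|_ /mapP[x xs ->]|] /=; first by rewrite !g_size sz.
    exact: irreducible_poly_rmorph (irr _ xs).
  by rewrite -map_comp (map_comp g snd) map_inj_uniq.
have g0 : frac_map g 0 = 0 by rewrite -tofrac0 frac_map_tofrac ?rmorph0.
rewrite /pfrac_sum big_map (big_morph _ (frac_mapD g_inj) g0).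
apply: eq_big_seq => x xs; rewrite -tofracXn frac_map_div ?rmorphXn ?tofracXn //.
by rewrite expf_neq0 // -size_poly_gt0 (leq_ltn_trans _ (sz x xs)).
Qed.

End PartialFractions.

Lemma in_VmE (K : fieldType) m f : in_Vm m f <-> @pfrac_expansion (ratxy K) m f.
Proof. by split=> [[s [sz irr s_uniq ->]] | [s [sz irr s_uniq] ->]]; exists s. Qed.

Unset Implicit Arguments.

Theorem lemma5p1 (K : fieldType) (m : nat)
  (charK : [pchar K] =i pred0) (m_gt0 : (0 < m)%N)
  (f : {fraction {poly {fraction {poly {poly K}}}}})
  (n : nat) (p : nat -> nat -> nat -> {fraction {poly {poly K}}}) :
  in_Vm m f -> in_Vm m (apply_op n p f).
Proof.
move=> /in_VmE f_exp; apply/in_VmE.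
do 3![apply: pfrac_expansion_sum => ? _]; apply: pfrac_expansion_mulC.
rewrite shift_xyzE; apply: pfrac_expansion_frac_map f_exp.
  by move=> q; rewrite size_shift_map_poly //; apply: fmorph_inj.
exact: shift_map_shift2_frac_bij.
Qed.
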